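(* Let $(X,w)$ be a weighted set and let $f:(X,w)\to(F(X,w),\|\cdot\|)$ be the universal $\mathsf{WSet}$-morphism into the free bounded archimedean $\ell$-algebra $F(X,w)$ on $(X,w)$. Then $\|f(x)\|=w(x)$ for every $x\in X$.
   Context: An $\ell$-algebra is a commutative unital $\mathbb{R}$-algebra with a lattice order compatible with addition, with products and nonnegative scalar multiples of nonnegative elements nonnegative. It is bounded if each $a\le n\cdot1$ for some $n\in\mathbb{N}$, archimedean if $n\cdot a\le b$ for all $n$ implies $a\le0$. $\mathbf{bal}$ is the category of bounded archimedean $\ell$-algebras and unital $\ell$-algebra homomorphisms; $\|a\|=\inf\{r\mid a\vee(-a)\le r\cdot1\}$. A weighted set is $(X,w)$ with $w:X\to[0,\infty)$; $\mathsf{WSet}$-morphisms $(X_1,w_1)\to(X_2,w_2)$ are functions with $w_2(f(x))\le w_1(x)$. The free object $F(X,w)$ with $f:(X,w)\to(F(X,w),\|\cdot\|)$ is characterized by: $F(X,w)\in\mathbf{bal}$, $f$ is a $\mathsf{WSet}$-morphism, and for every $A\in\mathbf{bal}$ and $\mathsf{WSet}$-morphism $h:(X,w)\to(A,\|\cdot\|)$ there is a unique $\mathbf{bal}$-morphism $\bar\alpha:F(X,w)\to A$ with $\bar\alpha\circ f=h$ (such a free object exists). *)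

From Stdlib Require Import Reals.
From Coquelicot Require Import Coquelicot.
Open Scope R_scope.

Record lalg := LAlg {
  car :> Type;
  zero : car; one : car;
  add : car -> car -> car; opp : car -> car; mul : car -> car -> car;
  scal : R -> car -> car;
  le : car -> car -> Prop;
  join : car -> car -> car; meet : car -> car -> car;
  addA : forall a b c, add a (add b c) = add (add a b) c;
  addC : forall a b, add a b = add b a;
  add0 : forall a, add zero a = a;
  addN : forall a, add (opp a) a = zero;
  mulA : forall a b c, mul a (mul b c) = mul (mul a b) c;
  mulC : forall a b, mul a b = mul b a;
  mul1 : forall a, mul one a = a;
  mulDl : forall a b c, mul (add a b) c = add (mul a c) (mul b c);
  scalDr : forall r a b, scal r (add a b) = add (scal r a) (scal r b);
  scalDl : forall r s a, scal (r + s) a = add (scal r a) (scal s a);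
  scalA : forall r s a, scal (r * s) a = scal r (scal s a);
  scal1 : forall a, scal 1 a = a;
  scalMl : forall r a b, scal r (mul a b) = mul (scal r a) b;
  le_refl : forall a, le a a;
  le_anti : forall a b, le a b -> le b a -> a = b;
  le_trans : forall a b c, le a b -> le b c -> le a c;
  join_l : forall a b, le a (join a b);
  join_r : forall a b, le b (join a b);
  join_lub : forall a b c, le a c -> le b c -> le (join a b) c;
  meet_l : forall a b, le (meet a b) a;
  meet_r : forall a b, le (meet a b) b;
  meet_glb : forall a b c, le c a -> le c b -> le c (meet a b);
  le_add : forall a b c, le a b -> le (add a c) (add b c);
  mul_ge0 : forall a b, le zero a -> le zero b -> le zero (mul a b);
  scal_ge0 : forall r a, 0 <= r -> le zero a -> le zero (scal r a)
}.

Arguments zero {l}. Arguments one {l}. Arguments add {l}. Arguments opp {l}.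
Arguments mul {l}. Arguments scal {l}. Arguments le {l}. Arguments join {l}.
Arguments meet {l}.

Definition bounded (A : lalg) : Prop :=
  forall a : A, exists n : nat, le a (scal (INR n) one).

Definition archimedean (A : lalg) : Prop :=
  forall a b : A, (forall n : nat, le (scal (INR n) a) b) -> le a zero.

Definition bal (A : lalg) : Prop := bounded A /\ archimedean A.

Definition lnorm (A : lalg) (a : A) : R :=
  real (Glb_Rbar (fun r => le (join a (opp a)) (scal r one))).

Definition is_bal_hom (A B : lalg) (g : A -> B) : Prop :=
  (forall a b, g (add a b) = add (g a) (g b)) /\
  (forall a b, g (mul a b) = mul (g a) (g b)) /\
  (forall r a, g (scal r a) = scal r (g a)) /\
  g one = one /\
  (forall a b, g (join a b) = join (g a) (g b)) /\
  (forall a b, g (meet a b) = meet (g a) (g b)).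

Definition weighted (X : Type) (w : X -> R) : Prop := forall x, 0 <= w x.

Definition wset_mor (X : Type) (w : X -> R) (A : lalg) (h : X -> A) : Prop :=
  forall x, lnorm A (h x) <= w x.

Definition is_free_bal (X : Type) (w : X -> R) (F : lalg) (f : X -> F) : Prop :=
  bal F /\ wset_mor X w F f /\
  forall (A : lalg), bal A -> forall h : X -> A, wset_mor X w A h ->
    exists alpha : F -> A,
      (is_bal_hom F A alpha /\ forall x, alpha (f x) = h x) /\
      forall beta : F -> A, is_bal_hom F A beta -> (forall x, beta (f x) = h x) ->
        forall y, beta y = alpha y.

(* One inequality is built in: f is a WSet-morphism, so ||f x|| <= w x.
   For the other, we test the free object against the simplest bounded
   archimedean l-algebra, the real line R itself, in which ||r|| = |r|.
   Since the weights are nonnegative, w : (X, w) -> (R, |.|) is a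
   WSet-morphism, so the universal property yields a unital l-algebra
   homomorphism alpha : F -> R with alpha (f x) = w x.  Any such real-valued
   homomorphism is monotone and commutes with negation, hence satisfies
   |alpha a| <= ||a|| on a bounded algebra; with a = f x this gives
   w x <= ||f x||. *)
From Stdlib Require Import Reals Lra.
From Coquelicot Require Import Coquelicot.
Open Scope R_scope.

Lemma glb_ge (E : R -> Prop) (c r0 : R) :
  E r0 -> (forall r, E r -> c <= r) -> c <= real (Glb_Rbar E).
Proof.
  intros HE Hlow. destruct (Glb_Rbar_correct E) as [Hlb Hglb].
  assert (Hc : Rbar_le (Finite c) (Glb_Rbar E)) by (apply Hglb; intros r Hr; apply Hlow, Hr).
  specialize (Hlb r0 HE).
  destruct (Glb_Rbar E); simpl in *; tauto.
Qed.

Lemma glb_ray (E : R -> Prop) (c : R) :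
  (forall r, E r <-> c <= r) -> real (Glb_Rbar E) = c.
Proof.
  intros HE. rewrite (is_glb_Rbar_unique E (Finite c)); [reflexivity|].
  split.
  - intros r Hr. apply HE, Hr.
  - intros b Hb. apply Hb, HE, Rle_refl.
Qed.

Definition Ralg : lalg.
Proof.
  apply (LAlg R 0 1 Rplus Ropp Rmult Rmult Rle Rmax Rmin); intros; try ring; try lra.
  - apply Rmax_l.
  - apply Rmax_r.
  - apply Rmax_lub; assumption.
  - apply Rmin_l.
  - apply Rmin_r.
  - apply Rmin_glb; assumption.
  - apply Rmult_le_pos; assumption.
  - apply Rmult_le_pos; assumption.
Defined.

Lemma Ralg_bal : bal Ralg.
Proof.
  split.
  - intros a. destruct (INR_archimed 1 a) as [n Hn]; [lra|].
    exists n. simpl in *. lra.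
  - intros a b Hab. simpl in *. destruct (Rle_dec a 0) as [|Hpos]; [assumption|].
    destruct (INR_archimed a b) as [n Hn]; [lra|].
    specialize (Hab n). lra.
Qed.

Lemma lnorm_Ralg (r : R) : lnorm Ralg r = Rabs r.
Proof.
  apply glb_ray. intros s. simpl.
  unfold Rmax, Rabs. destruct (Rle_dec r (- r)), (Rcase_abs r); split; intros; lra.
Qed.

(* Lattice homomorphisms are monotone, since a <= b iff a \/ b = b. *)
Lemma hom_mono (A B : lalg) (g : A -> B) :
  (forall a b, g (join a b) = join (g a) (g b)) ->
  forall a b, le a b -> le (g a) (g b).
Proof.
  intros Hjoin a b Hab.
  assert (Hb : join a b = b).
  { apply le_anti; [apply join_lub; [exact Hab | apply le_refl] | apply join_r]. }
  rewrite <- Hb, Hjoin. apply join_l.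
Qed.

Lemma add_cancel (A : lalg) (a b c : A) : add a b = add a c -> b = c.
Proof.
  intros H.
  rewrite <- (add0 A b), <- (add0 A c), <- (addN A a), <- !addA, H.
  reflexivity.
Qed.

Lemma hom_opp (A B : lalg) (g : A -> B) :
  (forall a b, g (add a b) = add (g a) (g b)) ->
  forall a, g (opp a) = opp (g a).
Proof.
  intros Hadd a.
  assert (Hzero : g zero = zero).
  { apply (add_cancel B (g zero)). rewrite <- Hadd, !add0, addC, add0. reflexivity. }
  apply (add_cancel B (g a)). rewrite <- Hadd, addC, addN, (addC _ (g a)), addN.
  exact Hzero.
Qed.

(* A real-valued unital l-algebra homomorphism on a bounded l-algebra is a
   contraction: applying it to |a| <= r.1 gives |g a| <= r. *)
Lemma hom_Ralg_contraction (A : lalg) (g : A -> Ralg) :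
  bounded A -> is_bal_hom A Ralg g -> forall a, Rabs (g a) <= lnorm A a.
Proof.
  intros Hbd (Hadd & _ & Hscal & Hone & Hjoin & _) a.
  destruct (Hbd (join a (opp a))) as [n Hn].
  apply (glb_ge _ _ (INR n) Hn). intros r Hr.
  apply (hom_mono _ _ _ Hjoin) in Hr.
  rewrite Hjoin, Hscal, Hone, (hom_opp _ _ _ Hadd) in Hr. simpl in Hr.
  unfold Rmax, Rabs in *. destruct (Rle_dec (g a) (- g a)), (Rcase_abs (g a)); lra.
Qed.

Theorem mainTheorem7 (X : Type) (w : X -> R) (hw : weighted X w)
  (F : lalg) (f : X -> F) (hF : is_free_bal X w F f) :
  forall x : X, lnorm F (f x) = w x.
Proof.
  intros x. destruct hF as [[Hbd _] [Hf Huniv]].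
  assert (Hw : wset_mor X w Ralg w).
  { intros y. rewrite lnorm_Ralg, Rabs_pos_eq by apply hw. apply Rle_refl. }
  destruct (Huniv Ralg Ralg_bal w Hw) as [alpha [[Halpha Halpha_f] _]].
  apply Rle_antisym; [apply Hf|].
  rewrite <- (Rabs_pos_eq (w x)) by apply hw.
  rewrite <- Halpha_f. apply hom_Ralg_contraction; assumption.
Qed.
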